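(* Let $T$ be a string, let $1\le j\le |T|$, $1\le i\le j+1$, let $w$ be a string, and let $L=T[1..i-1]$, $R=T[j+1..|T|]$ and $T'=LwR$. Assume $|L|\ge |R|$, $|w|\le |L|/2$, and that the longest border of $Lw$ is longer than $|w|$. Partition the set of borders of $Lw$ into groups $G_1,\dots,G_m$ so that two borders lie in the same group iff they have the same smallest period, and let $p_k$ be the common smallest period of the borders in $G_k$. Assume that $T'$ has a border longer than $R$, and let $b^\star$ be the border of $Lw$ such that $b^\star R$ is the longest border of $T'$; let $k^\star$ be the index of the group containing $b^\star$. Let $\alpha_{k^\star}$ be the exponent of the longest prefix of $T'$ having period $p_{k^\star}$, and let $r_{k^\star}=\mathit{lce}_{T'}(|T'|-|R|-p_{k^\star}+1,\ |T'|-|R|+1)$. If $b^\star$ is periodic and $p_{k^\star}\ne\mathsf{per}(b^\star R)$, then $|b^\star|=\alpha_{k^\star}p_{k^\star}-r_{k^\star}$.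
   Context: $S[i..j]$ denotes the factor of $S$ from position $i$ to $j$ (empty if $i>j$). A border of a nonempty string $S$ is a string that is both a proper prefix and a proper suffix of $S$. If $S$ has a border $b$ then $|S|-|b|$ is a period of $S$; $\mathsf{per}(S)$ is the smallest period of $S$. The exponent of $S$ is $|S|/\mathsf{per}(S)$; $S$ is periodic if $\mathsf{per}(S)\le|S|/2$. For a string $S$ and positions $a,b$, $\mathit{lce}_S(a,b)$ is the length of the longest common prefix of $S[a..|S|]$ and $S[b..|S|]$. *)

(* Strings are sequences over an arbitrary eqType alphabet.
   Positions in the paper are 1-based; we translate explicitly. *)
From mathcomp Require Import all_boot all_order all_algebra.
Set Implicit Arguments. Unset Strict Implicit. Unset Printing Implicit Defensive.

Section Strings.
Variable A : eqType.
Implicit Types (S b : seq A).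

Definition is_border S b : bool :=
  [&& size b < size S, prefix b S & suffix b S].

Definition is_period S (p : nat) : bool :=
  (0 < p <= size S) &&
  [forall i : 'I_(size S), (i + p < size S) ==>
      (nth None (map Some S) i == nth None (map Some S) (i + p))].

(* smallest period of S (|S| is a period of any nonempty S, so for
   nonempty S this is the minimum; per [::] = 0 is an irrelevant junk value). *)
Definition per S : nat :=
  head (size S) [seq p <- iota 1 (size S) | is_period S p].

Definition periodic S : bool := 2 * per S <= size S.

Definition exponent S : rat := ((size S)%:R / (per S)%:R)%R.

Definition longest_prefix_with_period S (p : nat) : nat :=
  \max_(l < (size S).+1 | is_period (take l S) p) l.

Fixpoint lcp (s t : seq A) : nat :=
  match s, t with
  | x :: s', y :: t' => if x == y then (lcp s' t').+1 else 0
  | _, _ => 0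
  end.

(* lce_S(a,b) with 1-based positions a, b: lcp of S[a..|S|] and S[b..|S|] *)
Definition lce S (a b : nat) : nat := lcp (drop a.-1 S) (drop b.-1 S).
End Strings.

From mathcomp Require Import all_boot all_order all_algebra.
From mathcomp Require Import zify.
Set Implicit Arguments. Unset Strict Implicit. Unset Printing Implicit Defensive.

Import GRing.Theory Num.Theory.

(* Write m = |bstar|, p = per bstar and f = bstar ++ R.  As f is the suffix
   of T' that starts after the first |Lw| - m letters, r is the length by which
   the period p of bstar runs on into R inside f; the run stops before the end
   of R, for otherwise f would have period p and hence smallest period p.  As f
   is also a prefix of T', the longest prefix of T' with period p therefore has
   length m + r, and its smallest period is p because it extends bstar.  Hence
   alpha * p = m + r.  Besides per f <> p, only the facts that f is a border of
   T' and that bstar is nonempty are needed. *)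

Section Periods.
Variable A : eqType.
Implicit Types (S s t u v x y : seq A).

Definition has_period S p :=
  forall k, k + p < size S -> onth S k = onth S (k + p).

Lemma onth_take n S k : k < n -> onth (take n S) k = onth S k.
Proof. by move=> lt_kn; rewrite !onthE map_take nth_take. Qed.

Lemma onth_drop n S k : onth (drop n S) k = onth S (n + k).
Proof. by rewrite !onthE map_drop nth_drop. Qed.

Lemma is_periodP S p :
  reflect (0 < p <= size S /\ has_period S p) (is_period S p).
Proof.
apply: (iffP andP) => -[p_range per_S]; split=> //.
  move=> k lt_kpS; have lt_kS : k < size S by lia.
  by move/forallP/(_ (Ordinal lt_kS))/implyP/(_ lt_kpS)/eqP: per_S; rewrite -!onthE.
apply/forallP=> k; apply/implyP=> lt_kpS.
by apply/eqP; rewrite -!onthE; apply: per_S.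
Qed.

Lemma has_period_take l S p : has_period S p -> has_period (take l S) p.
Proof.
move=> per_S k; rewrite size_take_min => lt_kp.
rewrite !onth_take; try lia.
by apply: per_S; lia.
Qed.

Lemma is_period_prefix u S p :
  prefix u S -> p <= size u -> is_period S p -> is_period u p.
Proof.
case/prefixP=> v ->{S} le_pu /is_periodP[/andP[p_gt0 _] per_uv].
apply/is_periodP; split; first by rewrite p_gt0.
by rewrite -(take_size_cat v (erefl (size u))); apply: has_period_take.
Qed.

Lemma per_min S p : is_period S p -> per S <= p.
Proof.
move=> per_Sp; have : p \in [seq q <- iota 1 (size S) | is_period S q].
  by rewrite mem_filter per_Sp mem_iota; case/is_periodP: per_Sp; lia.
have := sorted_filter leq_trans (is_period S) (iota_sorted 1 (size S)).
rewrite /per; case: [seq q <- _ | _] => [|q0 s] //= /(order_path_min leq_trans).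
by move/allP=> le_q0s; rewrite inE => /predU1P[-> | /le_q0s].
Qed.

Lemma is_period_per S : 0 < size S -> is_period S (per S).
Proof.
move=> S_gt0; have : size S \in [seq q <- iota 1 (size S) | is_period S q].
  rewrite mem_filter mem_iota; apply/andP; split; last lia.
  by apply/is_periodP; split=> [|k]; lia.
rewrite /per; case def_s: [seq q <- _ | _] => [|q s] //= _.
by have := mem_head q s; rewrite -def_s mem_filter => /andP[].
Qed.

Lemma per_prefix_eq u S :
  prefix u S -> 0 < size u -> is_period S (per u) -> per S = per u.
Proof.
move=> pre_uS u_gt0 per_Su; have le_Su := per_min per_Su.
have /is_periodP[/andP[_ le_uu] _] := is_period_per u_gt0.
have /is_periodP[/andP[per_gt0 le_uS] _] := per_Su.
apply/eqP; rewrite eqn_leq le_Su per_min // (is_period_prefix pre_uS) //.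
  exact: leq_trans le_Su le_uu.
by apply: is_period_per; lia.
Qed.

Lemma lcp_leqr s t : lcp s t <= size t.
Proof. by elim: s t => [|x s IHs] [|y t] //=; case: eqP => // _; apply: IHs. Qed.

Lemma lcp_onth s t k : k < lcp s t -> onth s k = onth t k.
Proof.
elim: s t k => [|x s IHs] [|y t] [|k] //=; case: eqP => // eq_xy.
  by rewrite eq_xy.
exact: IHs.
Qed.

Lemma lcp_onth_neq s t :
  lcp s t < size s -> lcp s t < size t -> onth s (lcp s t) != onth t (lcp s t).
Proof.
elim: s t => [|x s IHs] [|y t] //=; case: eqP => [-> | ne_xy _ _] /=.
  exact: IHs.
by apply/eqP=> -[].
Qed.

Lemma lcp_cat s t x y :
  lcp s t < size s -> lcp s t < size t -> lcp (s ++ x) (t ++ y) = lcp s t.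
Proof.
by elim: s t => [|a s IHs] [|b t] //=; case: eqP => // _ lt_s lt_t; rewrite IHs.
Qed.

Section PeriodExtension.
Variables (S : seq A) (m p : nat).
Hypotheses (p_gt0 : 0 < p) (le_pm : p <= m) (le_mS : m <= size S).
Hypothesis per_m : has_period (take m S) p.
Local Notation r := (lcp (drop (m - p) S) (drop m S)).

Lemma lcp_shift_leq : m + r <= size S.
Proof. by have := lcp_leqr (drop (m - p) S) (drop m S); rewrite size_drop; lia. Qed.

Lemma has_period_take_lcp : has_period (take (m + r) S) p.
Proof.
move=> k; rewrite size_takel ?lcp_shift_leq // => lt_kpr.
rewrite !onth_take; [ | lia ..].
have [lt_kpm | le_mkp] := ltnP (k + p) m.
  have := per_m (k := k); rewrite size_takel // => /(_ lt_kpm).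
  by rewrite !onth_take //; lia.
have := @lcp_onth (drop (m - p) S) (drop m S) (k + p - m).
rewrite !onth_drop.
have -> : m - p + (k + p - m) = k by lia.
have -> : m + (k + p - m) = k + p by lia.
by apply; lia.
Qed.

Lemma longest_prefix_with_period_lcp : longest_prefix_with_period S p = m + r.
Proof.
have le_mrS := lcp_shift_leq.
apply/eqP; rewrite eqn_leq; apply/andP; split.
  apply/bigmax_leqP=> l /is_periodP[_ per_l]; rewrite leqNgt; apply/negP=> lt_mrl.
  have le_lS : l <= size S by rewrite -ltnS.
  have lt_rm : r < size (drop m S) by rewrite size_drop; lia.
  have lt_rmp : r < size (drop (m - p) S) by rewrite size_drop; lia.
  have := lcp_onth_neq lt_rmp lt_rm; rewrite !onth_drop.
  have := per_l (m - p + r); rewrite size_takel // !onth_take; try lia.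
  by rewrite addnAC subnK // => /(_ lt_mrl) ->; rewrite eqxx.
have lt_mr : m + r < (size S).+1 by rewrite ltnS.
rewrite /longest_prefix_with_period.
apply: (@leq_bigmax_cond _ _ (fun l : 'I_(size S).+1 => nat_of_ord l) (Ordinal lt_mr)).
apply/is_periodP; split; last exact: has_period_take_lcp.
by rewrite /= size_takel //; lia.
Qed.

End PeriodExtension.

Lemma lce_cat_shift v f a b :
  lce (v ++ f) (size v + a).+1 (size v + b).+1 = lcp (drop a f) (drop b f).
Proof. by rewrite /lce /= !drop_cat !ltnNge !leq_addr /= !addKn. Qed.

Section BorderExtension.
Variables (S u R : seq A).
Hypotheses (pre_uR : prefix (u ++ R) S) (u_gt0 : 0 < size u).
Hypothesis per_uR_neq : per (u ++ R) <> per u.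
Local Notation p := (per u).
Local Notation m := (size u).
Local Notation r := (lcp (drop (m - p) (u ++ R)) (drop m (u ++ R))).

Let per_u_range : 0 < p <= m.
Proof. by case/is_periodP: (is_period_per u_gt0). Qed.

Let has_period_u : has_period u p.
Proof. by case/is_periodP: (is_period_per u_gt0). Qed.

Lemma lcp_border_lt : r < size R.
Proof.
have := lcp_leqr (drop (m - p) (u ++ R)) (drop m (u ++ R)).
rewrite size_drop size_cat addKn leq_eqVlt => /predU1P[r_eq | //].
have per_uR : has_period (take (m + r) (u ++ R)) p.
  apply: has_period_take_lcp; rewrite ?take_size_cat ?size_cat //; lia.
case: per_uR_neq; apply: per_prefix_eq (prefix_prefix _ _) u_gt0 _.
apply/is_periodP; rewrite size_cat; split; first lia.
by move: per_uR; rewrite r_eq -size_cat take_size.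
Qed.

Lemma lcp_border_prefix :
  lcp (drop (m - p) S) (drop m S) = r.
Proof.
have lt_r := lcp_border_lt; case/prefixP: pre_uR => z ->.
have lt_r_mp : r < size (drop (m - p) (u ++ R)) by rewrite !size_drop size_cat; lia.
have lt_r_m : r < size (drop m (u ++ R)) by rewrite !size_drop size_cat; lia.
rewrite [drop (m - p) _]drop_cat [drop m _]drop_cat !size_cat !ifT; try lia.
exact: lcp_cat.
Qed.

Lemma exponent_longest_prefix_with_period :
  (exponent (take (longest_prefix_with_period S p) S) * p%:R = (m + r)%:R :> rat)%R.
Proof.
have le_uRS := size_prefix pre_uR; rewrite size_cat in le_uRS.
have take_m : take m S = u.
  by case/prefixP: pre_uR => z ->; rewrite -catA take_size_cat.
have per_m : has_period (take m S) p by rewrite take_m.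
have lt_r := lcp_border_lt.
rewrite (@longest_prefix_with_period_lcp S m) ?lcp_border_prefix //; try lia.
have le_mr_S : m + r <= size S by lia.
have per_take : per (take (m + r) S) = p.
  apply: per_prefix_eq => //; first by rewrite prefixE take_takel ?leq_addr ?take_m.
  apply/is_periodP; rewrite size_takel //; split; first lia.
  by rewrite -lcp_border_prefix; apply: has_period_take_lcp => //; lia.
rewrite /exponent per_take size_takel // mulfVK // pnatr_eq0 -lt0n; lia.
Qed.

End BorderExtension.

End Periods.

Theorem lemma10 (A : eqType) (T w bstar : seq A) (i j : nat) :
  1 <= j <= size T ->
  1 <= i <= j.+1 ->
  let L := take i.-1 T in          (* L = T[1..i-1] *)
  let R := drop j T in             (* R = T[j+1..|T|] *)
  let T' := L ++ w ++ R in
  size R <= size L ->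
  2 * size w <= size L ->
  (* the longest border of Lw is longer than |w| *)
  (exists b, is_border (L ++ w) b && (size w < size b)) ->
  (* T' has a border longer than R *)
  (exists b, is_border T' b && (size R < size b)) ->
  (* b* is a border of Lw such that b* R is the longest border of T' *)
  is_border (L ++ w) bstar ->
  is_border T' (bstar ++ R) ->
  (forall b, is_border T' b -> size b <= size (bstar ++ R)) ->
  (* p_{k*} : the common smallest period of the group containing b* *)
  let p := per bstar in
  let alpha := exponent (take (longest_prefix_with_period T' p) T') in
  let r := lce T' (size T' - size R - p + 1) (size T' - size R + 1) in
  periodic bstar ->
  p <> per (bstar ++ R) ->
  ((size bstar)%:R = alpha * p%:R - r%:R :> rat)%R.
Proof.
move=> _ _ L R T' _ _ _ [b /andP[border_b lt_Rb]] _ border_bR max_bR p alpha r _ ne_p.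
have bstar_gt0 : 0 < size bstar by have := max_bR b border_b; rewrite size_cat; lia.
have /is_periodP[/andP[_ le_p] _] := is_period_per bstar_gt0.
case/and3P: border_bR => _ pre_bR /suffixP[v def_T'].
have -> : r = lcp (drop (size bstar - p) (bstar ++ R)) (drop (size bstar) (bstar ++ R)).
  by rewrite /r def_T' -(lce_cat_shift v) !size_cat; congr lce; lia.
rewrite /alpha (exponent_longest_prefix_with_period pre_bR bstar_gt0 (not_eq_sym ne_p)).
by rewrite natrD addrK.
Qed.
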